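(* Let $W_0,W_1,\dots\subseteq C^\omega$ be prefix-independent $\Sigma_2^0$ objectives, $\kappa$ a cardinal, and $U_0,U_1,\dots$ $C$-graphs such that each $U_i$ is $(\kappa,W_i)$-universal for prefix-independent objectives. Let $W=\bigcup_iW_i$ and let $U$ be the direct sum of the $U_i$'s. Then $U\ltimes\kappa$ is $(\kappa,W)$-universal for prefix-independent objectives.
   Context: An objective $W\subseteq C^\omega$ is $\Sigma_2^0$ if $W=\{w: w\text{ has finitely many prefixes in }L\}$ for some $L\subseteq C^*$; prefix-independent if $uw\in W\iff w\in W$. A $C$-pregraph: vertex set $V(G)$, edges $E(G)\subseteq V(G)\times C\times V(G)$ written $v\xrightarrow{c}v'$; a $C$-graph if no sinks; a $C$-pretree is a $C$-pregraph with a root $t_0$ such that each vertex has a unique path from $t_0$. A morphism maps vertices so edges go to edges of the same colour. A (pre)graph satisfies $W$ if every infinite path from every vertex has colour sequence in $W$. A $C$-graph $U$ is $(\kappa,W)$-universal for prefix-independent objectives if $U$ satisfies $W$ and every $C$-pretree of cardinality $<\kappa$ satisfying $W$ admits a morphism into $U$. The direct sum of $(G_\lambda)_{\lambda<\alpha}$ (indexed by an ordinal; here $\alpha=\omega$) is their disjoint union together with all edges $v\xrightarrow{c}v'$, $c\in C$, with $v\in V(G_\lambda)$, $v'\in V(G_{\lambda'})$, $\lambda>\lambda'$. For a graph $U$ and ordinal $\alpha$, $U\ltimes\alpha$ has vertices $V(U)\times\alpha$ and edges $(v,\lambda)\xrightarrow{c}(v',\lambda')$ whenever $\lambda>\lambda'$,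 or $\lambda=\lambda'$ and $v\xrightarrow{c}v'\in E(U)$. *)

From Stdlib Require Import List Arith.
Import ListNotations.



Definition prefix {C : Type} (w : nat -> C) (n : nat) : list C :=
  map w (seq 0 n).

Definition concat {C : Type} (u : list C) (w : nat -> C) : nat -> C :=
  fun n => match nth_error u n with
           | Some c => c
           | None => w (n - length u)
           end.

Definition Sigma02 {C : Type} (W : (nat -> C) -> Prop) : Prop :=
  exists L : list C -> Prop,
    forall w, W w <-> exists N, forall n, N <= n -> ~ L (prefix w n).

Definition prefix_independent {C : Type} (W : (nat -> C) -> Prop) : Prop :=
  forall (u : list C) (w : nat -> C), W (concat u w) <-> W w.

Record pregraph (C : Type) := Pregraph {
  vert : Type;
  edge : vert -> C -> vert -> Prop }.

Arguments vert {C}.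
Arguments edge {C}.

Definition is_graph {C : Type} (G : pregraph C) : Prop :=
  forall v : vert G, exists c v', edge G v c v'.

(* finite path from x given as its sequence of edges (colour, target) *)
Fixpoint fpath {C : Type} (G : pregraph C) (x : vert G) (s : list (C * vert G)) : Prop :=
  match s with
  | [] => True
  | (c, y) :: s' => edge G x c y /\ fpath G y s'
  end.

Definition fpath_end {C : Type} (G : pregraph C) (x : vert G) (s : list (C * vert G)) : vert G :=
  last (map snd s) x.

Definition is_pretree {C : Type} (G : pregraph C) (t0 : vert G) : Prop :=
  forall v : vert G, exists! s : list (C * vert G), fpath G t0 s /\ fpath_end G t0 s = v.

Definition is_morphism {C : Type} (G H : pregraph C) (f : vert G -> vert H) : Prop :=
  forall x c y, edge G x c y -> edge H (f x) c (f y).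

Definition satisfies {C : Type} (G : pregraph C) (W : (nat -> C) -> Prop) : Prop :=
  forall (p : nat -> vert G) (c : nat -> C),
    (forall n, edge G (p n) (c n) (p (S n))) -> W c.

Definition card_le (A B : Type) : Prop := exists f : A -> B, forall x y, f x = f y -> x = y.
Definition card_lt (A B : Type) : Prop := card_le A B /\ ~ card_le B A.

(* kappa as a cardinal: an initial ordinal, i.e. a strict well-order (K, lt)
   each of whose proper initial segments has cardinality < |K| *)
Definition is_cardinal (K : Type) (lt : K -> K -> Prop) : Prop :=
  well_founded lt /\
  (forall x y z, lt x y -> lt y z -> lt x z) /\
  (forall x y, lt x y \/ x = y \/ lt y x) /\
  (forall x : K, card_lt {y : K | lt y x} K).

Definition universal {C : Type} (K : Type) (W : (nat -> C) -> Prop) (U : pregraph C) : Prop :=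
  is_graph U /\ satisfies U W /\
  forall (T : pregraph C) (t0 : vert T),
    is_pretree T t0 -> card_lt (vert T) K -> satisfies T W ->
    exists f : vert T -> vert U, is_morphism T U f.

Definition direct_sum {C : Type} (G : nat -> pregraph C) : pregraph C :=
  {| vert := {i : nat & vert (G i)};
     edge := fun x c y =>
       projT1 y < projT1 x \/
       exists i (v v' : vert (G i)),
         x = existT _ i v /\ y = existT _ i v' /\ edge (G i) v c v' |}.

Definition lex_prod {C : Type} (U : pregraph C) (K : Type) (lt : K -> K -> Prop) : pregraph C :=
  {| vert := (vert U * K)%type;
     edge := fun x c y =>
       lt (snd y) (snd x) \/ (snd y = snd x /\ edge U (fst x) c (fst y)) |}.

(* Every vertex [t] of a small pretree [T] satisfying [W = \bigcup_i W_i] gets an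
   ordinal level: level [x] consists of the vertices that, in the subgraph left after
   removing the lower levels, are safe for some [W_i] (all infinite paths from them
   in that subgraph satisfy [W_i]).  Distinct nonempty levels inject [kappa] into [T],
   so some level [x] is empty; then no vertex of the remaining subgraph is safe for
   any [W_i], and since the [W_i] are prefix-independent [Sigma_2^0] sets one can
   build, by dependent choice, a path in it that hits the bad prefixes of every
   [W_i] infinitely often, contradicting [W].  Hence every vertex has a level.
   Along edges the level does not increase, and within a level neither does the
   least index [i] of an objective for which the vertex is safe; each block of
   vertices with the same level and index unfolds into pretrees satisfying [W_i],
   which embed into [U_i].  Mapping [t] to the image of its block, tagged with its
   index and its level, is a morphism into [U ⋉ kappa]. *)

From Stdlib Require Import List Arith Lia Classical ClassicalEpsilon.
From Stdlib Require Import FunctionalExtensionality Eqdep_dec Wf_nat.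
Import ListNotations.

Lemma sig_ext {A} (P : A -> Prop) (u v : sig P) : proj1_sig u = proj1_sig v -> u = v.
Proof. apply eq_sig_hprop. intros; apply proof_irrelevance. Qed.

Lemma last_cons_default {A} (l : list A) (x y : A) : last (y :: l) x = last l y.
Proof.
  revert x y; induction l as [|a l IH]; intros x y; [reflexivity|].
  change (last (a :: l) x = last (a :: l) y). rewrite (IH x a), (IH y a). reflexivity.
Qed.

Lemma nat_least (P : nat -> Prop) :
  (exists n, P n) -> exists n, P n /\ forall m, P m -> n <= m.
Proof.
  intros HP.
  destruct (dec_inh_nat_subset_has_unique_least_element P (fun n => classic (P n)) HP)
    as [n [[Hn Hmin] _]].
  eauto.
Qed.

Lemma card_le_lt_trans (A B K : Type) : card_le A B -> card_lt B K -> card_lt A K.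
Proof.
  intros [f Hf] [[g Hg] HKB]. split.
  - exists (fun a => g (f a)). auto.
  - intros [h Hh]. apply HKB. exists (fun k => f (h k)). auto.
Qed.

Section FinitePaths.
Context {C : Type}.
Variable G : pregraph C.

Lemma fpath_end_cons x c y s : fpath_end G x ((c, y) :: s) = fpath_end G y s.
Proof. apply last_cons_default. Qed.

Lemma fpath_end_snoc x s c y : fpath_end G x (s ++ [(c, y)]) = y.
Proof. unfold fpath_end. rewrite map_app. apply last_last. Qed.

Lemma fpath_app x s1 s2 :
  fpath G x (s1 ++ s2) <-> fpath G x s1 /\ fpath G (fpath_end G x s1) s2.
Proof.
  revert x; induction s1 as [|[c y] s1 IH]; intros x; simpl; [tauto|].
  rewrite fpath_end_cons, IH. tauto.
Qed.

Lemma fpath_end_app x s1 s2 :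
  fpath_end G x (s1 ++ s2) = fpath_end G (fpath_end G x s1) s2.
Proof.
  revert x; induction s1 as [|[c y] s1 IH]; intros x; [reflexivity|].
  simpl. rewrite !fpath_end_cons. apply IH.
Qed.

Lemma fpath_snoc x s c y :
  fpath G x (s ++ [(c, y)]) <-> fpath G x s /\ edge G (fpath_end G x s) c y.
Proof. rewrite fpath_app. simpl. tauto. Qed.

Section Pretree.
Variables (t0 : vert G) (HT : is_pretree G t0).

Lemma pretree_path_unique s s' :
  fpath G t0 s -> fpath G t0 s' -> fpath_end G t0 s = fpath_end G t0 s' -> s = s'.
Proof.
  intros Hs Hs' E. destruct (HT (fpath_end G t0 s)) as [s0 [_ Hs0]].
  rewrite <- (Hs0 s (conj Hs eq_refl)). apply Hs0. auto.
Qed.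

Lemma root_path_exists t : exists s, fpath G t0 s /\ fpath_end G t0 s = t.
Proof. destruct (HT t) as [s [Hs _]]. eauto. Qed.

Definition root_path (t : vert G) : list (C * vert G) :=
  proj1_sig (constructive_indefinite_description _ (root_path_exists t)).

Lemma root_path_spec t : fpath G t0 (root_path t) /\ fpath_end G t0 (root_path t) = t.
Proof. exact (proj2_sig (constructive_indefinite_description _ (root_path_exists t))). Qed.

Lemma root_path_snoc t c t' : edge G t c t' -> root_path t' = root_path t ++ [(c, t')].
Proof.
  intros He. destruct (root_path_spec t) as [Hs Es].
  apply pretree_path_unique; [apply root_path_spec | |].
  - apply fpath_snoc. rewrite Es. auto.
  - rewrite fpath_end_snoc. apply root_path_spec.
Qed.

End Pretree.
End FinitePaths.

Section InfiniteWords.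
Context {A : Type}.

Definition shift (w : nat -> A) (N : nat) : nat -> A := fun n => w (N + n).

Lemma concat_prefix_lt (w w' : nat -> A) N n : n < N -> concat (prefix w N) w' n = w n.
Proof.
  intros Hn. unfold concat, prefix. rewrite nth_error_map, nth_error_seq.
  destruct (Nat.ltb_spec n N); [reflexivity | lia].
Qed.

Lemma concat_prefix_ge (w w' : nat -> A) N n :
  N <= n -> concat (prefix w N) w' n = w' (n - N).
Proof.
  intros Hn. unfold concat, prefix. rewrite nth_error_map, nth_error_seq.
  destruct (Nat.ltb_spec n N); [lia|]. simpl. rewrite length_map, length_seq. reflexivity.
Qed.

Lemma concat_prefix_shift (w : nat -> A) N : concat (prefix w N) (shift w N) = w.
Proof.
  apply functional_extensionality. intros n. destruct (Nat.lt_ge_cases n N).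
  - apply concat_prefix_lt. assumption.
  - rewrite concat_prefix_ge by assumption. unfold shift. f_equal. lia.
Qed.

Lemma prefix_independent_shift (W : (nat -> A) -> Prop) w N :
  prefix_independent W -> W (shift w N) <-> W w.
Proof. intros HW. rewrite <- (HW (prefix w N)), concat_prefix_shift. reflexivity. Qed.

Lemma prefix_ext (w w' : nat -> A) N :
  (forall n, n < N -> w n = w' n) -> prefix w N = prefix w' N.
Proof.
  intros Hw. apply map_ext_in. intros n Hn. apply in_seq in Hn. apply Hw. lia.
Qed.

End InfiniteWords.

Section InfinitePaths.
Context {C : Type}.

Definition is_ipath (G : pregraph C) (p : nat -> vert G) (c : nat -> C) : Prop :=
  forall n, edge G (p n) (c n) (p (S n)).

Definition restrict (G : pregraph C) (R : vert G -> Prop) : pregraph C :=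
  {| vert := vert G; edge := fun x a y => R x /\ edge G x a y /\ R y |}.

Definition safe_in (G : pregraph C) (W : (nat -> C) -> Prop) (t : vert G) : Prop :=
  forall p c, p 0 = t -> is_ipath G p c -> W c.

Lemma is_ipath_splice (G : pregraph C) p c p' c' N :
  is_ipath G p c -> is_ipath G p' c' -> p' 0 = p N ->
  is_ipath G (concat (prefix p N) p') (concat (prefix c N) c').
Proof.
  intros Hp Hp' E n. destruct (Nat.lt_ge_cases n N) as [Hn | Hn].
  - rewrite (concat_prefix_lt p), (concat_prefix_lt c) by exact Hn.
    destruct (Nat.lt_ge_cases (S n) N).
    + rewrite concat_prefix_lt by assumption. apply Hp.
    + rewrite concat_prefix_ge by assumption.
      replace (S n - N) with 0 by lia. replace N with (S n) in E by lia.
      rewrite E. apply Hp.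
  - rewrite !concat_prefix_ge by lia. replace (S n - N) with (S (n - N)) by lia. apply Hp'.
Qed.

Lemma satisfies_morphism (G H : pregraph C) (f : vert G -> vert H) W :
  is_morphism G H f -> satisfies H W -> satisfies G W.
Proof. intros Hf HW p c Hp. apply (HW (fun n => f (p n))). intros n. apply Hf, Hp. Qed.

Lemma safe_in_edge (G : pregraph C) W t a t' :
  prefix_independent W -> safe_in G W t -> edge G t a t' -> safe_in G W t'.
Proof.
  intros HW Ht He p c E Hp.
  apply (prefix_independent_shift W (fun n => match n with 0 => a | S m => c m end) 1 HW).
  apply (Ht (fun n => match n with 0 => t | S m => p m end)); [reflexivity|].
  intros [|n]; [subst; exact He | apply Hp].
Qed.

Lemma restrict_fpath (G : pregraph C) R x s : fpath (restrict G R) x s -> fpath G x s.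
Proof.
  revert x; induction s as [|[c y] s IH]; intros x; simpl; [tauto|]. intuition.
Qed.

Lemma fpath_end_restrict (G : pregraph C) R x s : fpath_end (restrict G R) x s = fpath_end G x s.
Proof. reflexivity. Qed.

Lemma restrict_ipath_mono (G : pregraph C) (R R' : vert G -> Prop) p c :
  (forall v, R v -> R' v) -> is_ipath (restrict G R) p c -> is_ipath (restrict G R') p c.
Proof. intros HR Hp n. destruct (Hp n) as (H1 & H2 & H3). repeat split; auto. Qed.

End InfinitePaths.

Section WellFounded.
Context {A : Type} {lt : A -> A -> Prop}.
Hypothesis lt_wf : well_founded lt.

Lemma wf_irrefl x : ~ lt x x.
Proof. induction (lt_wf x) as [x _ IH]. intros H. exact (IH x H H). Qed.

Lemma wf_min_value (k : nat -> A) : exists N, forall n, ~ lt (k n) (k N).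
Proof.
  apply NNPP; intros Hno.
  assert (Hnone : forall a N, k N = a -> False).
  { intros a. induction (lt_wf a) as [a _ IH]. intros N <-.
    destruct (not_all_not_ex _ _ (fun H => Hno (ex_intro _ N H))) as [n Hn].
    exact (IH (k n) Hn n eq_refl). }
  exact (Hnone (k 0) 0 eq_refl).
Qed.

Lemma wf_eventually_constant (k : nat -> A) :
  (forall n, lt (k (S n)) (k n) \/ k (S n) = k n) -> exists N, forall n, N <= n -> k n = k N.
Proof.
  intros Hk. destruct (wf_min_value k) as [N HN]. exists N.
  intros n Hn; induction Hn as [|n Hn IH]; [reflexivity|].
  destruct (Hk n) as [H | H]; [|congruence].
  rewrite IH in H. destruct (HN _ H).
Qed.

End WellFounded.

Lemma lex_prod_is_graph {C} (G : pregraph C) K lt : is_graph G -> is_graph (lex_prod G K lt).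
Proof. intros HG [v x]. destruct (HG v) as (a & v' & He). exists a, (v', x). right. auto. Qed.

Lemma lex_prod_ipath_tail {C} (G : pregraph C) K lt p c :
  well_founded lt -> is_ipath (lex_prod G K lt) p c ->
  exists N, is_ipath G (fun n => fst (p (N + n))) (shift c N).
Proof.
  intros lt_wf Hp.
  destruct (wf_eventually_constant lt_wf (fun n => snd (p n))) as [N HN].
  { intros n. destruct (Hp n) as [H | [H _]]; auto. }
  exists N. intros n. unfold shift. rewrite Nat.add_succ_r.
  destruct (Hp (N + n)) as [H | [_ H]]; [|exact H].
  rewrite (HN (S (N + n))), (HN (N + n)) in H by lia. destruct (wf_irrefl lt_wf _ H).
Qed.

Section DirectSum.
Context {C : Type}.
Variable U : nat -> pregraph C.

Lemma direct_sum_is_graph : (forall i, is_graph (U i)) -> is_graph (direct_sum U).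
Proof.
  intros HU [i v]. destruct (HU i v) as (a & v' & He).
  exists a, (existT _ i v'). right. exists i, v, v'. auto.
Qed.

Lemma direct_sum_edge_intro i v a v' :
  edge (U i) v a v' -> edge (direct_sum U) (existT _ i v) a (existT _ i v').
Proof. intros He. right. exists i, v, v'. auto. Qed.

Lemma direct_sum_edge_inv i v a v' :
  edge (direct_sum U) (existT _ i v) a (existT _ i v') -> edge (U i) v a v'.
Proof.
  intros [H | (j & w & w' & E & E' & He)]; [simpl in H; lia|].
  pose proof (f_equal (@projT1 _ _) E) as Ej. simpl in Ej. subst j.
  apply inj_pair2_eq_dec in E, E'; try exact Nat.eq_dec. subst. exact He.
Qed.

Lemma direct_sum_ipath_tail q c :
  is_ipath (direct_sum U) q c ->
  exists i N (pv : nat -> vert (U i)), is_ipath (U i) pv (shift c N).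
Proof.
  intros Hq.
  destruct (wf_eventually_constant lt_wf (fun n => projT1 (q n))) as [N HN].
  { intros n. destruct (Hq n) as [H | (j & v & v' & -> & -> & _)]; [left | right]; auto. }
  set (i := projT1 (q N)).
  destruct (choice (fun n v => q (N + n) = existT _ i v)) as [pv Hpv].
  { intros n. generalize (HN (N + n) ltac:(lia)). fold i.
    destruct (q (N + n)) as [j v]. simpl. intros ->. eauto. }
  exists i, N, pv. intros n. apply direct_sum_edge_inv.
  rewrite <- !Hpv, Nat.add_succ_r. apply Hq.
Qed.

End DirectSum.

Lemma lex_prod_direct_sum_satisfies {C} (W : nat -> (nat -> C) -> Prop) U K lt :
  (forall i, prefix_independent (W i)) -> (forall i, satisfies (U i) (W i)) ->
  well_founded lt -> satisfies (lex_prod (direct_sum U) K lt) (fun w => exists i, W i w).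
Proof.
  intros HW HU lt_wf p c Hp.
  destruct (lex_prod_ipath_tail _ _ _ _ _ lt_wf Hp) as [N HN].
  destruct (direct_sum_ipath_tail _ _ _ HN) as (i & M & pv & Hpv).
  exists i. apply (prefix_independent_shift _ c N (HW i)).
  apply (prefix_independent_shift _ _ M (HW i)). exact (HU i pv _ Hpv).
Qed.

(* [k = m * m + j] with [j <= 2 * m] is sent to [j]: each [i] is hit for every [m >= i]. *)
Definition schedule (k : nat) : nat := k - Nat.sqrt k * Nat.sqrt k.

Lemma schedule_infinitely_often i M : exists k, M <= k /\ schedule k = i.
Proof.
  exists ((M + i) * (M + i) + i). split; [nia|].
  unfold schedule. rewrite (Nat.sqrt_unique _ (M + i)) by nia. lia.
Qed.

Lemma dependent_choice_nat {A} (P : A -> Prop) (step : nat -> A -> A -> Prop) (a0 : A) :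
  P a0 -> (forall k a, P a -> exists a', P a' /\ step k a a') ->
  exists f : nat -> A, forall k, P (f k) /\ step k (f k) (f (S k)).
Proof.
  intros H0 Hstep.
  destruct (choice (fun (ka : nat * A) a' => P (snd ka) -> P a' /\ step (fst ka) (snd ka) a'))
    as [g Hg].
  { intros [k a]. destruct (classic (P a)) as [Ha | Ha].
    - destruct (Hstep k a Ha) as [a' Ha']. eauto.
    - exists a. simpl. tauto. }
  set (f := nat_rect (fun _ => A) a0 (fun k a => g (k, a))).
  assert (Hf : forall k, P (f k)) by (induction k; [exact H0 | apply (Hg (k, f k)), IHk]).
  exists f. intros k. split; [apply Hf | apply (Hg (k, f k)), Hf].
Qed.

Lemma strict_mono_ge (N : nat -> nat) : (forall k, N k < N (S k)) -> forall k, k <= N k.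
Proof. intros HN k. induction k; [lia|]. specialize (HN k). lia. Qed.

Lemma chain_limit {A} (f : nat -> nat -> A) (N : nat -> nat) :
  (forall k, N k < N (S k)) -> (forall k n, n < N k -> f (S k) n = f k n) ->
  forall k n, n < N k -> f (S n) n = f k n.
Proof.
  intros HN Hf.
  assert (Hmono : forall k d, N k <= N (d + k)).
  { intros k d. induction d; simpl; [lia|]. specialize (HN (d + k)). lia. }
  assert (Hstable : forall k d n, n < N k -> f (d + k) n = f k n).
  { intros k d n Hn. induction d; [reflexivity|]. simpl.
    rewrite Hf; [exact IHd|]. specialize (Hmono k d). lia. }
  intros k n Hn. destruct (Nat.le_gt_cases (S n) k) as [Hk | Hk].
  - rewrite <- (Nat.sub_add (S n) k Hk). symmetry. apply Hstable.
    pose proof (strict_mono_ge N HN (S n)). lia.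
  - rewrite <- (Nat.sub_add k (S n)) by lia. apply Hstable. exact Hn.
Qed.

Section UnsafeRegion.
Variables (C : Type) (G : pregraph C) (R : vert G -> Prop).
Variables (W : nat -> (nat -> C) -> Prop) (L : nat -> list C -> Prop).
Hypothesis HL : forall i w, W i w <-> exists N, forall n, N <= n -> ~ L i (prefix w n).
Hypothesis HW : forall i, prefix_independent (W i).
Hypothesis Hsat : satisfies G (fun w => exists i, W i w).
Hypothesis Hunsafe : forall v i, R v -> ~ safe_in (restrict G R) (W i) v.

Lemma unsafe_extend p c N i :
  is_ipath (restrict G R) p c ->
  exists p' c' N', is_ipath (restrict G R) p' c' /\ N < N' /\
    (forall n, n < N -> p' n = p n /\ c' n = c n) /\ L i (prefix c' N').
Proof.
  intros Hp.
  assert (HRN : R (p N)) by apply (Hp N).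
  assert (exists p1 c1, p1 0 = p N /\ is_ipath (restrict G R) p1 c1 /\ ~ W i c1)
    as (p1 & c1 & E & Hp1 & Hc1).
  { apply NNPP; intros Hno. apply (Hunsafe _ i HRN). intros p1 c1 E Hp1.
    apply NNPP; intros Hc1. apply Hno. eauto. }
  set (c' := concat (prefix c N) c1).
  assert (Hc' : ~ W i c') by (intros Hc; apply Hc1, (HW i (prefix c N)), Hc).
  assert (exists n, S N <= n /\ L i (prefix c' n)) as (n & Hn & HLn).
  { apply NNPP; intros Hno. apply Hc', HL. exists (S N). intros n Hn HLn. eauto. }
  exists (concat (prefix p N) p1), c', n.
  split; [apply is_ipath_splice; assumption|]. split; [lia|]. split; [|exact HLn].
  intros m Hm. split; apply concat_prefix_lt; exact Hm.
Qed.

Record ray := Ray { ray_vert : nat -> vert G; ray_col : nat -> C; ray_len : nat }.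

Definition ray_extends (k : nat) (r r' : ray) : Prop :=
  ray_len r < ray_len r' /\
  (forall n, n < ray_len r -> ray_vert r' n = ray_vert r n /\ ray_col r' n = ray_col r n) /\
  L (schedule k) (prefix (ray_col r') (ray_len r')).

(* Extending rays forever, with the [k]-th extension ending on a bad prefix for
   [W (schedule k)], yields a path whose colouring lies in no [W i]. *)
Lemma unsafe_region_empty v : ~ R v.
Proof.
  intros Hv.
  assert (exists p0 c0, is_ipath (restrict G R) p0 c0) as (p0 & c0 & Hp0).
  { apply NNPP; intros Hno. apply (Hunsafe v 0 Hv). intros p c _ Hp. exfalso. apply Hno. eauto. }
  destruct (dependent_choice_nat (fun r => is_ipath (restrict G R) (ray_vert r) (ray_col r))
              ray_extends (Ray p0 c0 0) Hp0) as [f Hf].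
  { intros k [p c N] Hp. destruct (unsafe_extend p c N (schedule k) Hp)
      as (p' & c' & N' & Hp' & HN' & Hagree & HLk).
    exists (Ray p' c' N'). split; [exact Hp' | split; [exact HN' | split; [exact Hagree | exact HLk]]]. }
  set (N k := ray_len (f k)).
  assert (HN : forall k, N k < N (S k)) by (intros k; apply Hf).
  set (p n := ray_vert (f (S n)) n).
  set (c n := ray_col (f (S n)) n).
  assert (Hp : forall k n, n < N k -> p n = ray_vert (f k) n).
  { apply (chain_limit (fun k => ray_vert (f k)) N HN). intros k n Hn. apply Hf, Hn. }
  assert (Hc : forall k n, n < N k -> c n = ray_col (f k) n).
  { apply (chain_limit (fun k => ray_col (f k)) N HN). intros k n Hn. apply Hf, Hn. }
  assert (Hpath : is_ipath G p c).
  { intros n. pose proof (strict_mono_ge N HN (S (S n))).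
    rewrite (Hp (S (S n)) n), (Hp (S (S n)) (S n)), (Hc (S (S n)) n) by lia.
    apply (proj1 (Hf (S (S n))) n). }
  destruct (Hsat p c Hpath) as [i Hi]. apply HL in Hi as [M HM].
  destruct (schedule_infinitely_often i M) as (k & Hk & <-).
  pose proof (strict_mono_ge N HN (S k)).
  apply (HM (N (S k))); [lia|].
  rewrite (prefix_ext c (ray_col (f (S k)))) by (intros n Hn; apply Hc, Hn).
  apply Hf.
Qed.

End UnsafeRegion.

Section Unfolding.
Context {C : Type}.
Variables (H : pregraph C) (r : vert H).

Definition unfolding : pregraph C :=
  {| vert := {q : list (C * vert H) | fpath H r q};
     edge := fun a c b => exists y, proj1_sig b = proj1_sig a ++ [(c, y)] |}.

Definition unfolding_root : vert unfolding := exist _ [] I.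

Lemma unfolding_path_to q (Hq : fpath H r q) :
  exists s, fpath unfolding unfolding_root s /\
            fpath_end unfolding unfolding_root s = exist _ q Hq.
Proof.
  revert Hq; induction q as [|[c y] q IH] using rev_ind; intros Hq.
  - exists []. split; [exact I | apply sig_ext; reflexivity].
  - assert (Hq' : fpath H r q) by (apply fpath_snoc in Hq; tauto).
    destruct (IH Hq') as (s & Hs & Es).
    exists (s ++ [(c, exist _ (q ++ [(c, y)]) Hq)]). split.
    + apply fpath_snoc. split; [exact Hs|]. rewrite Es. exists y. reflexivity.
    + apply fpath_end_snoc.
Qed.

Lemma unfolding_path_extends a s :
  fpath unfolding a s ->
  exists l, proj1_sig (fpath_end unfolding a s) = proj1_sig a ++ l /\ length l = length s.
Proof.
  revert a; induction s as [|[c b] s IH]; intros a Hs.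
  - exists []. rewrite app_nil_r. auto.
  - destruct Hs as [[y Ey] Hs]. rewrite fpath_end_cons.
    destruct (IH b Hs) as (l & El & Hl). exists ((c, y) :: l). split.
    + rewrite El, Ey, <- app_assoc. reflexivity.
    + simpl. auto.
Qed.

Lemma unfolding_path_nil a s :
  fpath unfolding a s -> fpath_end unfolding a s = a -> s = [].
Proof.
  intros Hs E. destruct (unfolding_path_extends a s Hs) as (l & El & Hl).
  rewrite E in El. apply (f_equal (@length _)) in El. rewrite length_app in El.
  destruct s; [reflexivity | simpl in Hl; lia].
Qed.

Lemma unfolding_path_unique a s s' :
  fpath unfolding a s -> fpath unfolding a s' ->
  fpath_end unfolding a s = fpath_end unfolding a s' -> s = s'.
Proof.
  revert a s'; induction s as [|[c b] s IH]; intros a s' Hs Hs' E.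
  - symmetry. exact (unfolding_path_nil a s' Hs' (eq_sym E)).
  - destruct s' as [|[c' b'] s']; [exact (unfolding_path_nil a _ Hs E)|].
    destruct Hs as [[y Ey] Hs], Hs' as [[y' Ey'] Hs']. rewrite !fpath_end_cons in E.
    destruct (unfolding_path_extends b s Hs) as (l & El & _).
    destruct (unfolding_path_extends b' s' Hs') as (l' & El' & _).
    assert (Eq : proj1_sig a ++ (c, y) :: l = proj1_sig a ++ (c', y') :: l').
    { rewrite <- E, El, Ey, Ey', <- !app_assoc in El'. exact El'. }
    apply app_inv_head in Eq. injection Eq as <- <- _.
    assert (b = b') as <- by (apply sig_ext; congruence).
    f_equal. exact (IH b s' Hs Hs' E).
Qed.

Lemma unfolding_pretree : is_pretree unfolding unfolding_root.
Proof.
  intros [q Hq]. destruct (unfolding_path_to q Hq) as (s & Hs & Es).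
  exists s. split; [auto|]. intros s' [Hs' Es'].
  apply (unfolding_path_unique unfolding_root); [exact Hs | exact Hs' | rewrite Es, Es'; reflexivity].
Qed.

Lemma unfolding_endpoint_morphism :
  is_morphism unfolding H (fun a => fpath_end H r (proj1_sig a)).
Proof.
  intros [q Hq] c [q' Hq'] [y E]. simpl in *. subst q'.
  rewrite fpath_end_snoc. apply fpath_snoc in Hq'. tauto.
Qed.

End Unfolding.

Lemma unfolding_restrict_card_le {C} (T : pregraph C) t0 (R : vert T -> Prop) r :
  is_pretree T t0 -> card_le (vert (unfolding (restrict T R) r)) (vert T).
Proof.
  intros HT. exists (fun a => fpath_end T r (proj1_sig a)).
  intros [q1 H1] [q2 H2] E. apply sig_ext. simpl in *.
  destruct (root_path_spec _ _ HT r) as [Hr Er].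
  apply (app_inv_head (root_path _ _ HT r)), (pretree_path_unique _ _ HT).
  - apply fpath_app. rewrite Er. split; [exact Hr | exact (restrict_fpath _ _ _ _ H1)].
  - apply fpath_app. rewrite Er. split; [exact Hr | exact (restrict_fpath _ _ _ _ H2)].
  - rewrite !fpath_end_app, Er. exact E.
Qed.

(* [anchor x s] splits off the longest final segment of the path [s] (from [x]) that
   is a path of [H]: it returns its starting point and the segment itself. *)
Section Anchor.
Context {C : Type}.
Variable H : pregraph C.

Definition anchor_step (st : vert H * list (C * vert H)) (e : C * vert H) :
    vert H * list (C * vert H) :=
  if excluded_middle_informative (edge H (fpath_end H (fst st) (snd st)) (fst e) (snd e))
  then (fst st, snd st ++ [e]) else (snd e, []).

Definition anchor (x : vert H) (s : list (C * vert H)) : vert H * list (C * vert H) :=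
  fold_left anchor_step s (x, []).

Lemma anchor_fpath x s : fpath H (fst (anchor x s)) (snd (anchor x s)).
Proof.
  assert (Hfold : forall l st, fpath H (fst st) (snd st) ->
            fpath H (fst (fold_left anchor_step l st)) (snd (fold_left anchor_step l st))).
  { induction l as [|[c y] l IH]; intros st Hst; [exact Hst|]. apply IH.
    unfold anchor_step. destruct (excluded_middle_informative _); simpl; [|exact I].
    apply fpath_snoc. auto. }
  apply Hfold. exact I.
Qed.

Lemma anchor_end x s : fpath_end H (fst (anchor x s)) (snd (anchor x s)) = fpath_end H x s.
Proof.
  assert (Hfold : forall l st,
            fpath_end H (fst (fold_left anchor_step l st)) (snd (fold_left anchor_step l st)) =
            fpath_end H (fpath_end H (fst st) (snd st)) l).
  { induction l as [|[c y] l IH]; intros st; [reflexivity|]. simpl. rewrite IH, fpath_end_cons.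
    f_equal. unfold anchor_step. destruct (excluded_middle_informative _); simpl;
      [apply fpath_end_snoc | reflexivity]. }
  apply Hfold.
Qed.

Lemma anchor_snoc x s c y :
  edge H (fpath_end H x s) c y ->
  anchor x (s ++ [(c, y)]) = (fst (anchor x s), snd (anchor x s) ++ [(c, y)]).
Proof.
  intros He. unfold anchor at 1. rewrite fold_left_app. simpl.
  change (fold_left anchor_step s (x, [])) with (anchor x s).
  unfold anchor_step at 1. rewrite anchor_end.
  destruct (excluded_middle_informative _); [reflexivity | contradiction].
Qed.

Definition anchored x s : vert (unfolding H (fst (anchor x s))) :=
  exist _ (snd (anchor x s)) (anchor_fpath x s).

Lemma anchored_edge (V : pregraph C) (g : forall r, vert (unfolding H r) -> vert V) x s c y :
  (forall r, is_morphism (unfolding H r) V (g r)) -> edge H (fpath_end H x s) c y ->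
  edge V (g _ (anchored x s)) c (g _ (anchored x (s ++ [(c, y)]))).
Proof.
  intros Hg He. unfold anchored. generalize (anchor_fpath x (s ++ [(c, y)])).
  rewrite (anchor_snoc x s c y He). intros Hpath. apply Hg. exists y. reflexivity.
Qed.

End Anchor.

Section Embedding.
Variables (C : Type) (W : nat -> (nat -> C) -> Prop) (L : nat -> list C -> Prop).
Variables (K : Type) (ltK : K -> K -> Prop) (U : nat -> pregraph C).
Variables (T : pregraph C) (t0 : vert T).
Hypothesis HL : forall i w, W i w <-> exists N, forall n, N <= n -> ~ L i (prefix w n).
Hypothesis HW : forall i, prefix_independent (W i).
Hypothesis ltK_wf : well_founded ltK.
Hypothesis ltK_trans : forall x y z, ltK x y -> ltK y z -> ltK x z.
Hypothesis ltK_total : forall x y, ltK x y \/ x = y \/ ltK y x.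
Hypothesis HU : forall i, universal K (W i) (U i).
Hypothesis HT : is_pretree T t0.
Hypothesis Hcard : card_lt (vert T) K.
Hypothesis Hsat : satisfies T (fun w => exists i, W i w).

Definition level : K -> vert T -> Prop :=
  Fix ltK_wf (fun _ => vert T -> Prop)
    (fun x rec t => (forall y h, ~ rec y h t) /\
       exists i, safe_in (restrict T (fun v => forall y h, ~ rec y h v)) (W i) t).

Definition remaining (x : K) (t : vert T) : Prop := forall y, ltK y x -> ~ level y t.

Lemma level_eq x t :
  level x t <-> remaining x t /\ exists i, safe_in (restrict T (remaining x)) (W i) t.
Proof.
  unfold level at 1. rewrite Fix_eq; [reflexivity|].
  intros x' f g Hfg. replace g with f; [reflexivity|].
  apply functional_extensionality_dep; intros y.
  apply functional_extensionality_dep; intros h. apply Hfg.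
Qed.

Lemma level_remaining x t : level x t -> remaining x t.
Proof. intros Hx. apply level_eq, Hx. Qed.

Lemma level_unique x y t : level x t -> level y t -> x = y.
Proof.
  intros Hx Hy. destruct (ltK_total x y) as [H | [H | H]]; [|exact H|]; exfalso.
  - exact (level_remaining y t Hy x H Hx).
  - exact (level_remaining x t Hx y H Hy).
Qed.

Lemma level_edge x x' t c t' :
  level x t -> level x' t' -> edge T t c t' -> x' = x \/ ltK x' x.
Proof.
  intros Hx Hx' He. destruct (ltK_total x' x) as [H | [H | H]]; auto. exfalso.
  assert (Hrem : remaining x t').
  { intros y Hy Hl. rewrite (level_unique _ _ _ Hl Hx') in Hy.
    exact (wf_irrefl ltK_wf _ (ltK_trans _ _ _ Hy H)). }
  apply level_eq in Hx as [Ht [i Hi]].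
  assert (Hxt' : level x t').
  { apply level_eq. split; [exact Hrem|]. exists i.
    apply (safe_in_edge (restrict T (remaining x))) with t c; auto. split; auto. }
  rewrite (level_unique _ _ _ Hxt' Hx') in H. exact (wf_irrefl ltK_wf _ H).
Qed.

Lemma level_edge_safe x i t c t' :
  level x t -> level x t' -> edge T t c t' ->
  safe_in (restrict T (remaining x)) (W i) t -> safe_in (restrict T (remaining x)) (W i) t'.
Proof.
  intros Hx Hx' He Hi. apply (safe_in_edge (restrict T (remaining x))) with t c; auto.
  split; [apply level_remaining, Hx | split; [exact He | apply level_remaining, Hx']].
Qed.

Lemma level_empty_exists : exists x, forall t, ~ level x t.
Proof.
  apply NNPP; intros Hno. apply (proj2 Hcard).
  destruct (choice level) as [h Hh].
  { intros x. apply NNPP; intros Hx. apply Hno. exists x. intros t Ht. eauto. }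
  exists h. intros x y E. apply (level_unique x y (h x)); [apply Hh | rewrite E; apply Hh].
Qed.

Lemma level_exists t : exists x, level x t.
Proof.
  destruct level_empty_exists as [x Hx].
  assert (Hrem : ~ remaining x t).
  { apply (unsafe_region_empty C T (remaining x) W L HL HW Hsat).
    intros v i Hv Hi. apply (Hx v), level_eq. eauto. }
  apply NNPP; intros Hno. apply Hrem. intros y _ Hy. eauto.
Qed.

Definition level_of (t : vert T) : K :=
  proj1_sig (constructive_indefinite_description _ (level_exists t)).

Lemma level_of_spec t : level (level_of t) t.
Proof. exact (proj2_sig (constructive_indefinite_description _ (level_exists t))). Qed.

Lemma index_exists t :
  exists i, safe_in (restrict T (remaining (level_of t))) (W i) t /\
            forall j, safe_in (restrict T (remaining (level_of t))) (W j) t -> i <= j.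
Proof. apply nat_least, level_eq, level_of_spec. Qed.

Definition index_of (t : vert T) : nat :=
  proj1_sig (constructive_indefinite_description _ (index_exists t)).

Lemma index_of_spec t :
  safe_in (restrict T (remaining (level_of t))) (W (index_of t)) t /\
  forall j, safe_in (restrict T (remaining (level_of t))) (W j) t -> index_of t <= j.
Proof. exact (proj2_sig (constructive_indefinite_description _ (index_exists t))). Qed.

Lemma level_of_edge t c t' :
  edge T t c t' -> level_of t' = level_of t \/ ltK (level_of t') (level_of t).
Proof. intros He. apply level_edge with t c t'; auto; apply level_of_spec. Qed.

Lemma index_of_edge t c t' :
  edge T t c t' -> level_of t' = level_of t -> index_of t' <= index_of t.
Proof.
  intros He E. apply (proj2 (index_of_spec t')). rewrite E.
  apply level_edge_safe with t c; [apply level_of_spec | rewrite <- E; apply level_of_spec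
                                  | exact He | apply index_of_spec].
Qed.

Definition block (x : K) (i : nat) (t : vert T) : Prop := level_of t = x /\ index_of t = i.

Lemma block_satisfies x i : satisfies (restrict T (block x i)) (W i).
Proof.
  intros p c Hp. destruct (proj1 (Hp 0)) as [Ex Ei].
  destruct (index_of_spec (p 0)) as [Hsafe _]. rewrite Ei in Hsafe.
  apply (Hsafe p c eq_refl). apply (restrict_ipath_mono _ (block x i)); [|exact Hp].
  intros v [Ev _]. rewrite Ex, <- Ev. apply level_remaining, level_of_spec.
Qed.

Lemma block_unfolding_embeds x i r :
  exists g, is_morphism (unfolding (restrict T (block x i)) r) (U i) g.
Proof.
  destruct (HU i) as (_ & _ & Huniv). apply (Huniv _ (unfolding_root _ r)).
  - apply unfolding_pretree.
  - apply card_le_lt_trans with (vert T); [apply unfolding_restrict_card_le with t0|]; assumption.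
  - eapply satisfies_morphism; [apply unfolding_endpoint_morphism | apply block_satisfies].
Qed.

Definition block_map x i r : vert (unfolding (restrict T (block x i)) r) -> vert (U i) :=
  proj1_sig (constructive_indefinite_description _ (block_unfolding_embeds x i r)).

Lemma block_map_morphism x i r :
  is_morphism (unfolding (restrict T (block x i)) r) (U i) (block_map x i r).
Proof. exact (proj2_sig (constructive_indefinite_description _ (block_unfolding_embeds x i r))). Qed.

Definition embedding (t : vert T) : vert (lex_prod (direct_sum U) K ltK) :=
  let x := level_of t in let i := index_of t in
  (existT _ i (block_map x i _ (anchored (restrict T (block x i)) t0 (root_path _ _ HT t))),
   x).

Lemma embedding_morphism : is_morphism T (lex_prod (direct_sum U) K ltK) embedding.
Proof.
  intros t c t' He. unfold embedding. simpl.
  destruct (level_of_edge t c t' He) as [Ex | Hlt]; [right; split; [exact Ex|] | left; exact Hlt].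
  destruct (Nat.lt_ge_cases (index_of t') (index_of t)) as [Hlt | Hge]; [left; exact Hlt|].
  assert (Ei : index_of t' = index_of t) by (pose proof (index_of_edge t c t' He Ex); lia).
  rewrite Ex, Ei. apply direct_sum_edge_intro.
  rewrite (root_path_snoc _ _ HT t c t' He).
  apply (anchored_edge (restrict T (block (level_of t) (index_of t)))); [apply block_map_morphism|].
  rewrite fpath_end_restrict, (proj2 (root_path_spec _ _ HT t)).
  split; [split; reflexivity | split; [exact He | split; assumption]].
Qed.

End Embedding.

Theorem lemma6p10 (C : Type) (W : nat -> (nat -> C) -> Prop)
  (K : Type) (ltK : K -> K -> Prop) (U : nat -> pregraph C) :
  (forall i, Sigma02 (W i)) ->
  (forall i, prefix_independent (W i)) ->
  is_cardinal K ltK ->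
  (forall i, is_graph (U i)) ->
  (forall i, universal K (W i) (U i)) ->
  universal K (fun w => exists i, W i w) (lex_prod (direct_sum U) K ltK).
Proof.
  intros HS HW (ltK_wf & ltK_trans & ltK_total & _) HUg HU.
  destruct (choice (fun i L => forall w, W i w <-> exists N, forall n, N <= n -> ~ L (prefix w n))
              HS) as [L HL].
  split; [|split].
  - apply lex_prod_is_graph, direct_sum_is_graph, HUg.
  - apply lex_prod_direct_sum_satisfies; [exact HW | intros i; apply HU | exact ltK_wf].
  - intros T t0 HT Hcard Hsat. eexists.
    exact (embedding_morphism C W L K ltK U T t0 HL HW ltK_wf ltK_trans ltK_total HU HT Hcard Hsat).
Qed.
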